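(* Let $V$ be an operator space which is $\lambda$-subcoexact for some $\lambda<\infty$. If $\boldsymbol{K}$ is a completely compact matrix set in $V$, then $\boldsymbol{K}$ is operator compact.
   Context: Operator spaces are abstract (matrix normed) operator spaces. $\mathcal{T}_n$ denotes the trace class operators on $\mathbb{C}^n$ with the operator space structure of the dual of $M_n$; quotients carry the quotient operator space structure. For finite dimensional operator spaces $X,Y$, $d_{cb}(X,Y)=\inf\{\|\varphi\|_{cb}\|\varphi^{-1}\|_{cb}:\varphi:X\to Y \text{ a complete isomorphism}\}$. A finite dimensional operator space $X$ is $\lambda$-coexact if for every $\varepsilon>0$ there are $n$ and a subspace $W\subseteq\mathcal{T}_n$ with $d_{cb}(X,\mathcal{T}_n/W)<\lambda+\varepsilon$. An operator space $V$ is $\lambda$-subcoexact if every finite dimensional subspace of $V$ is contained in a finite dimensional subspace of $V$ which is $\lambda$-coexact. A matrix set $\boldsymbol{K}=(K_n)$ in $V$ is a sequence of subsets $K_n\subseteq M_n(V)$; closed if each $K_n$ is closed; completely bounded if $\sup\{\|x\|_n:x\in K_n,n\in\mathbb{N}\}<\infty$. $\boldsymbol{K}$ is completely compact if it is closed, completely bounded, and for every $\varepsilon>0$ there is a finite dimensional subspace $V_\varepsilon\subseteq V$ such that every $x\in K_n$ (any $n$) lies within distance $<\varepsilon$ of $M_n(V_\varepsilon)$. $\mathcal{K}$ denotes the compact operators on $\ell^2$, $\mathcal{K}(V)=\mathcal{K}\check{\otimes}V$ (operator-space minimal tensor product, the completion of $M_\infty(V)$, finitely supported infinite matrices over $V$).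 $\mathcal{T}$ is the trace class on $\ell^2$ as the operator space dual of $\mathcal{K}$, $M_k(\mathcal{T})\cong\mathcal{CB}(\mathcal{K},M_k)$ with norm $\|\cdot\|_{\mathcal{T}}$, $M_\infty\subseteq\mathcal{T}$, and $(\sigma\otimes\mathrm{id})(x)\in M_k(V)$ is the slice map for $\sigma\in M_k(\mathcal{T})$, $x\in\mathcal{K}(V)$. The absolutely matrix convex hull of $x\in\mathcal{K}(V)$ has $k$-th level $\{(\sigma\otimes\mathrm{id})(x):\sigma\in M_k(M_\infty),\|\sigma\|_{\mathcal{T}}\le1\}$. $\boldsymbol{K}$ is operator compact if it is closed and there is $x\in\mathcal{K}(V)$ with each $K_k$ contained in the closure of the $k$-th level of the absolutely matrix convex hull of $x$. *)

From HB Require Import structures.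
From mathcomp Require Import all_boot all_order all_algebra.
From mathcomp Require Import all_classical all_reals.
From mathcomp Require Import complex.

Set Implicit Arguments.
Unset Strict Implicit.
Unset Printing Implicit Defensive.

Import Order.TTheory GRing.Theory Num.Theory.
Local Open Scope ring_scope.
Local Open Scope classical_set_scope.

Section OperatorSpaces.
Variable R : realType.
Local Notation C := R[i].

Definition sqmod (z : C) : R := (@complex.Re R z) ^+ 2 + (@complex.Im R z) ^+ 2.

Definition opnormF (I J : finType) (A : I -> J -> C) : R :=
  sup [set t | exists v : J -> C,
         \sum_j sqmod (v j) <= 1 /\
         t = Num.sqrt (\sum_i sqmod (\sum_j A i j * v j))].

Definition opnorm (m n : nat) (A : 'M[C]_(m, n)) : R :=
  opnormF (fun (i : 'I_m) (j : 'I_n) => A i j).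

(** norm of M_r(M_p) = M_(r p) (C) *)
Definition blknorm (r p : nat) (B : 'M['M[C]_p]_r) : R :=
  opnormF (fun (i : 'I_r * 'I_p) (j : 'I_r * 'I_p) => B i.1 j.1 i.2 j.2).

Definition lmulmx (V : lmodType C) (n m p : nat) (a : 'M[C]_(n, m)) (x : 'M[V]_(m, p))
  : 'M[V]_(n, p) := \matrix_(i, j) \sum_k a i k *: x k j.
Definition rmulmx (V : lmodType C) (n m p : nat) (x : 'M[V]_(n, m)) (b : 'M[C]_(m, p))
  : 'M[V]_(n, p) := \matrix_(i, j) \sum_k b k j *: x i k.

(** Ruan's axioms: an (abstract, matrix normed) operator space structure on V *)
Definition is_opspace (V : lmodType C) (mn : forall n, 'M[V]_n -> R) : Prop :=
  [/\ (forall n (x : 'M[V]_n), 0 <= mn n x),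
      (forall n (x : 'M[V]_n), mn n x = 0 -> x = 0),
      (forall n (x y : 'M[V]_n), mn n (x + y) <= mn n x + mn n y),
      (forall n m (a : 'M[C]_(n, m)) (x : 'M[V]_m) (b : 'M[C]_(m, n)),
          mn n (rmulmx (lmulmx a x) b) <= opnorm a * mn m x * opnorm b) &
      (forall m n (x : 'M[V]_m) (y : 'M[V]_n),
          mn (m + n) (block_mx x 0 0 y) = Num.max (mn m x) (mn n y))].

(** T_n: the trace class on C^n, realised as 'M[C]_n, acting on M_n by the
    pairing <tau, A> = sum_{a,b} tau_ab A_ab.  The norm of
    tau in M_m(T_n) is the cb norm of the map M_n -> M_m, A |-> [<tau_pq, A>]. *)
Definition pairing (n : nat) (tau A : 'M[C]_n) : C := \sum_a \sum_b tau a b * A a b.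

Definition normMT (n m : nat) (tau : 'M['M[C]_n]_m) : R :=
  sup [set t | exists r (X : 'M['M[C]_n]_r),
         blknorm X <= 1 /\
         t = blknorm (\matrix_(i, j) \matrix_(p, q) pairing (tau p q) (X i j)
                       : 'M['M[C]_m]_r)].

Definition span (V : lmodType C) (s : seq V) : set V :=
  [set v | exists c : 'I_(size s) -> C, v = \sum_i c i *: s`_i].

(** A complete isomorphism X -> T_n/W is encoded by the (linear, surjective onto X)
    map q : T_n -> V with kernel W inducing its inverse T_n/W -> X; the quotient
    matrix norm on M_m(T_n/W) is inf_{w in M_m(W)} ||tau + w||. *)
Definition coexact (V : lmodType C) (mn : forall n, 'M[V]_n -> R) (lam : R) (X : set V) : Prop :=
  forall eps : R, 0 < eps ->
  exists n (q : {linear 'M[C]_n -> V}) (a b : R),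
    range q = X /\
    [/\ 0 <= a, 0 <= b, a * b < lam + eps,
        (* ||phi^-1||_cb <= b *)
        (forall m (tau : 'M['M[C]_n]_m), mn m (map_mx q tau) <= b * normMT tau) &
        (* ||phi||_cb <= a *)
        (forall m (y : 'M[V]_m), (forall i j, X (y i j)) ->
           forall delta : R, 0 < delta ->
           exists tau : 'M['M[C]_n]_m, map_mx q tau = y /\ normMT tau < a * mn m y + delta)].

Definition subcoexact (V : lmodType C) (mn : forall n, 'M[V]_n -> R) (lam : R) : Prop :=
  forall s0 : seq V, exists s : seq V, span s0 `<=` span s /\ coexact mn lam (span s).

Definition mxset (V : lmodType C) := forall n, set 'M[V]_n.

Definition mclosed (V : lmodType C) (mn : forall n, 'M[V]_n -> R) (K : mxset V) : Prop :=
  forall n (y : 'M[V]_n),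
    (forall eps : R, 0 < eps -> exists x, K n x /\ mn n (x - y) < eps) -> K n y.

Definition cbounded (V : lmodType C) (mn : forall n, 'M[V]_n -> R) (K : mxset V) : Prop :=
  exists M : R, forall n x, K n x -> mn n x <= M.

Definition completely_compact (V : lmodType C) (mn : forall n, 'M[V]_n -> R) (K : mxset V) : Prop :=
  [/\ mclosed mn K, cbounded mn K &
      forall eps : R, 0 < eps -> exists s : seq V,
        forall n x, K n x -> exists z : 'M[V]_n,
          (forall i j, span s (z i j)) /\ mn n (x - z) < eps].

(** Elements of K(V): Cauchy sequences (u_j) in M_infty(V) (finitely supported
    infinite matrices, u_j supported in [0, N_j)^2), norms being computed in
    any M_N(V) containing the supports. *)
Definition trunc (V : lmodType C) (N : nat) (f : nat -> nat -> V) : 'M[V]_N :=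
  \matrix_(a < N, b < N) f a b.

Definition KV_seq (V : lmodType C) (mn : forall n, 'M[V]_n -> R)
    (N : nat -> nat) (u : nat -> nat -> nat -> V) : Prop :=
  (forall j a b, (N j <= a)%N || (N j <= b)%N -> u j a b = 0) /\
  (forall eps : R, 0 < eps -> exists J, forall i j, (J <= i)%N -> (J <= j)%N ->
     mn (maxn (N i) (N j)) (trunc (maxn (N i) (N j)) (fun a b => u i a b - u j a b)) < eps).

(** slice map (sigma (x) id)(u_j) for sigma in M_k(M_infty), sigma supported in M x M *)
Definition slice (V : lmodType C) (k M : nat) (sigma : 'M['M[C]_M]_k) (uj : nat -> nat -> V)
  : 'M[V]_k := \matrix_(p, q) \sum_(a < M) \sum_(b < M) sigma p q a b *: uj a b.

(** y lies in the closure of the k-th level of the absolutely matrix convex hull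
    of x = lim_j u_j: for every eps there is sigma in M_k(M_infty) with
    ||sigma||_T <= 1 and ||(sigma (x) id)(x) - y|| < eps (expressed via the
    approximants u_j, as (sigma (x) id) is contractive). *)
Definition in_hull_closure (V : lmodType C) (mn : forall n, 'M[V]_n -> R)
    (u : nat -> nat -> nat -> V) (k : nat) (y : 'M[V]_k) : Prop :=
  forall eps : R, 0 < eps -> exists M (sigma : 'M['M[C]_M]_k),
    normMT sigma <= 1 /\
    exists J, forall j, (J <= j)%N -> mn k (slice sigma (u j) - y) < eps.

Definition operator_compact (V : lmodType C) (mn : forall n, 'M[V]_n -> R) (K : mxset V) : Prop :=
  mclosed mn K /\
  exists (N : nat -> nat) (u : nat -> nat -> nat -> V),
    KV_seq mn N u /\ forall k y, K k y -> in_hull_closure mn u y.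

End OperatorSpaces.

From Pilot Require Import Defs.
From HB Require Import structures.
From mathcomp Require Import all_boot all_order all_algebra.
From mathcomp Require Import all_classical all_reals.
From mathcomp Require Import complex.
From mathcomp Require Import ring lra zify.

(* Choose finite-dimensional lambda-coexact subspaces E_0 <= E_1 <= ... of V such
   that K_k lies within tol_l of M_k(E_l), with tol_l of order 8^-l.  Coexactness
   presents E_l as a quotient q_l : T_(n_l) -> E_l whose lifting and cb-norm
   constants a_l, b_l satisfy a_l b_l <= lambda + 1.  For y in K_k with
   approximants z_l in M_k(E_l), the increments z_l - z_(l-1) lift to tau_l in
   M_k(T_(n_l)) of norm about a_l tol_(l-1).  Put x = (+)_l c_l q_l(e_l), e_l the
   canonical element of M_(n_l)(T_(n_l)), and sigma = (+)_l tau_l / c_l; then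
   (sigma (x) id)(x) = sum_l q_l(tau_l) = lim z_l = y.  Taking c_l to be 2^(l+1)
   times the bound on ||tau_l|| makes ||sigma|| <= sum_l 2^-(l+1) <= 1, while the
   blocks of x have norm at most b_l c_l, of order 2^l (lambda + 1) tol_(l-1),
   which tends to 0, so x lies in K(V). *)

Set Implicit Arguments.
Unset Strict Implicit.
Unset Printing Implicit Defensive.

Import Order.TTheory GRing.Theory Num.Theory.
Local Open Scope ring_scope.
Local Open Scope classical_set_scope.
Local Open Scope complex_scope.

Section OperatorCompact.
Variable R : realType.
Local Notation C := R[i].
Local Notation Re := (@complex.Re R).
Local Notation Im := (@complex.Im R).

Section EuclideanNorm.

Definition rdot (x y : C) : R := Re x * Re y + Im x * Im y.

Lemma sqmod_ge0 (z : C) : 0 <= sqmod z.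
Proof. by rewrite addr_ge0 ?sqr_ge0. Qed.

Lemma sqmod0 : sqmod (0 : C) = 0.
Proof. by rewrite /sqmod /= expr0n addr0. Qed.

Lemma sqmodN (z : C) : sqmod (- z) = sqmod z.
Proof. by case: z => a b; rewrite /sqmod /= !sqrrN. Qed.

Lemma sqmodM (x y : C) : sqmod (x * y) = sqmod x * sqmod y.
Proof. by case: x => a b; case: y => c d; rewrite /sqmod /=; ring. Qed.

Lemma sqmodR (c : R) : sqmod c%:C = c ^+ 2.
Proof. by rewrite /sqmod /= expr0n addr0. Qed.

Lemma sqmodD (x y : C) : sqmod (x + y) = sqmod x + sqmod y + 2 * rdot x y.
Proof. by case: x => a b; case: y => c d; rewrite /sqmod /rdot /=; ring. Qed.

Lemma sqmodDZ (t : R) (x y : C) :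
  sqmod (x + t%:C * y) = sqmod x + 2 * t * rdot x y + t ^+ 2 * sqmod y.
Proof. by case: x => a b; case: y => c d; rewrite /sqmod /rdot /=; ring. Qed.

Lemma sqrt_sqmodR (c : R) : 0 <= c -> Num.sqrt (sqmod c%:C) = c.
Proof. by move=> c0; rewrite sqmodR sqrtr_sqr ger0_norm. Qed.

Variable I : finType.
Implicit Types x y : I -> C.

Lemma sum_sqmod_ge0 x : 0 <= \sum_i sqmod (x i).
Proof. by apply: sumr_ge0 => i _; apply: sqmod_ge0. Qed.

Lemma sqmod_le_sum x i : sqmod (x i) <= \sum_j sqmod (x j).
Proof. by rewrite (bigD1 i) //= lerDl; apply: sumr_ge0 => j _; apply: sqmod_ge0. Qed.

Lemma cauchy_schwarz_sqmod x y :
  (\sum_i rdot (x i) (y i)) ^+ 2 <= (\sum_i sqmod (x i)) * (\sum_i sqmod (y i)).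
Proof.
set S := \sum_i _; set P := \sum_i sqmod (x i); set Q := \sum_i sqmod (y i).
have discr t : 0 <= P + 2 * t * S + t ^+ 2 * Q.
  have := sum_sqmod_ge0 (fun i => x i + t%:C * y i).
  rewrite (eq_bigr _ (fun i _ => sqmodDZ t (x i) (y i))).
  by rewrite big_split big_split /= -!mulr_sumr.
have P0 : 0 <= P := sum_sqmod_ge0 x.
have [Q0|Q0] := eqVneq Q 0.
  have [->|S0] := eqVneq S 0; first by rewrite expr0n Q0 mulr0.
  have := discr (- (P + 1) / (2 * S)).
  have -> : 2 * (- (P + 1) / (2 * S)) * S = - (P + 1) by field; rewrite S0.
  rewrite Q0 mulr0 addr0; lra.
have Qp : 0 < Q by rewrite lt_def Q0 sum_sqmod_ge0.
have := discr (- (S / Q)).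
have E : S = S / Q * Q by rewrite mulfVK.
set t := S / Q in E *; rewrite E; nra.
Qed.

Lemma minkowski_sqmod x y :
  Num.sqrt (\sum_i sqmod (x i + y i)) <=
  Num.sqrt (\sum_i sqmod (x i)) + Num.sqrt (\sum_i sqmod (y i)).
Proof.
under eq_bigr do rewrite sqmodD.
rewrite big_split big_split /= -mulr_sumr.
have := cauchy_schwarz_sqmod x y.
set S := \sum_i _; set P := \sum_i sqmod (x i); set Q := \sum_i sqmod (y i) => CS.
have P0 : 0 <= P := sum_sqmod_ge0 x.
have Q0 : 0 <= Q := sum_sqmod_ge0 y.
have SPQ : S <= Num.sqrt P * Num.sqrt Q.
  rewrite -sqrtrM //; apply: le_trans (ler_norm S) _.
  by rewrite -sqrtr_sqr ler_sqrt // mulr_ge0.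
have sP := sqrtr_ge0 P; have sQ := sqrtr_ge0 Q.
rewrite -[X in _ <= X]ger0_norm ?addr_ge0 // -sqrtr_sqr ler_sqrt ?sqr_ge0 //.
rewrite sqrrD !sqr_sqrtr //; lra.
Qed.

Lemma minkowski_sqmod_big (T : Type) (s : seq T) (f : T -> I -> C) :
  Num.sqrt (\sum_i sqmod (\sum_(k <- s) f k i)) <=
  \sum_(k <- s) Num.sqrt (\sum_i sqmod (f k i)).
Proof.
elim: s => [|k s IH].
  under eq_bigr do rewrite big_nil sqmod0.
  by rewrite big1 // sqrtr0 big_nil.
under eq_bigr do rewrite big_cons.
by rewrite big_cons; apply: le_trans (minkowski_sqmod _ _) _; rewrite lerD2l.
Qed.

End EuclideanNorm.

Section OperatorNorm.
Variables I J : finType.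
Implicit Types A B : I -> J -> C.

Local Notation image_norm A v := (Num.sqrt (\sum_i sqmod (\sum_j A i j * v j))).
Local Notation in_unit_ball v := (\sum_j sqmod (v j) <= 1).

Lemma opnormF_set0 A :
  [set t | exists v, in_unit_ball v /\ t = image_norm A v] !=set0.
Proof.
exists 0, (fun _ => 0); split; first by rewrite big1 ?ler01 // => j _; rewrite sqmod0.
by rewrite big1 ?sqrtr0 // => i _; rewrite big1 ?sqmod0 // => j _; rewrite mulr0.
Qed.

Lemma opnormF_ub A v : in_unit_ball v -> image_norm A v <= opnormF A.
Proof.
move=> Hv; apply: ub_le_sup; last by exists v.
exists (\sum_j Num.sqrt (\sum_i sqmod (A i j))) => _ [w [Hw ->]].
apply: le_trans (minkowski_sqmod_big _ _) _; apply: ler_sum => j _.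
rewrite ler_sqrt; last exact: sum_sqmod_ge0.
apply: ler_sum => i _; rewrite sqmodM ler_piMr ?sqmod_ge0 //.
exact: le_trans (sqmod_le_sum w j) Hw.
Qed.

Lemma opnormF_le A c : (forall v, in_unit_ball v -> image_norm A v <= c) -> opnormF A <= c.
Proof. by move=> Hc; apply: ge_sup (opnormF_set0 A) _ => _ [v [Hv ->]]; apply: Hc. Qed.

Lemma opnormF_ge0 A : 0 <= opnormF A.
Proof.
have [_ [v [Hv _]]] := opnormF_set0 A.
exact: le_trans (sqrtr_ge0 _) (opnormF_ub A Hv).
Qed.

Lemma opnormF_sum (T : Type) (s : seq T) (F : T -> I -> J -> C) :
  opnormF (fun i j => \sum_(k <- s) F k i j) <= \sum_(k <- s) opnormF (F k).
Proof.
apply: opnormF_le => v Hv.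
have sumE i : \sum_j (\sum_(k <- s) F k i j) * v j = \sum_(k <- s) \sum_j F k i j * v j.
  by rewrite exchange_big; apply: eq_bigr => j _; rewrite mulr_suml.
under eq_bigr do rewrite sumE.
apply: le_trans (minkowski_sqmod_big _ _) _.
by apply: ler_sum => k _; apply: opnormF_ub.
Qed.

Lemma opnormFD A B : opnormF (fun i j => A i j + B i j) <= opnormF A + opnormF B.
Proof.
apply: opnormF_le => v Hv.
have sumE i : \sum_j (A i j + B i j) * v j = \sum_j A i j * v j + \sum_j B i j * v j.
  by rewrite -big_split; apply: eq_bigr => j _; rewrite mulrDl.
under eq_bigr do rewrite sumE.
by apply: le_trans (minkowski_sqmod _ _) _; apply: lerD; apply: opnormF_ub.
Qed.

Lemma opnormFZ A c :
  opnormF (fun i j => c * A i j) <= Num.sqrt (sqmod c) * opnormF A.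
Proof.
apply: opnormF_le => v Hv.
have sumE i : \sum_j c * A i j * v j = c * \sum_j A i j * v j.
  by rewrite mulr_sumr; apply: eq_bigr => j _; rewrite mulrA.
under eq_bigr do rewrite sumE sqmodM.
rewrite -mulr_sumr sqrtrM ?sqmod_ge0 // ler_wpM2l ?sqrtr_ge0 //.
exact: opnormF_ub.
Qed.

Lemma opnormF0 : opnormF (fun (i : I) (j : J) => 0 : C) <= 0.
Proof.
apply: opnormF_le => v _; rewrite big1 ?sqrtr0 // => i _.
by rewrite big1 ?sqmod0 // => j _; rewrite mul0r.
Qed.

End OperatorNorm.

Lemma opnormF_dominated (I J I' J' : finType) (A : I -> J -> C) (A' : I' -> J' -> C) :
  (forall v' : J' -> C, \sum_j sqmod (v' j) <= 1 -> exists v : J -> C,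
     \sum_j sqmod (v j) <= 1 /\
     \sum_i sqmod (\sum_j A' i j * v' j) <= \sum_i sqmod (\sum_j A i j * v j)) ->
  opnormF A' <= opnormF A.
Proof.
move=> dom; apply: opnormF_le => v' /dom [v [Hv le_v]].
by apply: le_trans (opnormF_ub A Hv); rewrite ler_sqrt ?sum_sqmod_ge0.
Qed.

Section TraceClassNorm.

Lemma sum_pair (U : nmodType) (I J : finType) (F : I * J -> U) :
  \sum_(p : I * J) F p = \sum_i \sum_j F (i, j).
Proof. by rewrite pair_bigA; apply: eq_bigr => -[]. Qed.

Lemma sum_delta (U : nmodType) (T : finType) (k0 : T) (F : T -> U) :
  \sum_k (if k == k0 then F k else 0) = F k0.
Proof. by rewrite -big_mkcond big_pred1_eq. Qed.

Lemma sqmod_if (b : bool) (x : C) : sqmod (if b then x else 0) = if b then sqmod x else 0.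
Proof. by case: b; rewrite ?sqmod0. Qed.

Lemma blknorm_entry_le (r n m : nat) (X : 'M['M[C]_n]_r) (p q : 'I_m) (a b : 'I_n) :
  opnormF (fun i j : 'I_r * 'I_m =>
     if (i.2 == p) && (j.2 == q) then X i.1 j.1 a b else 0) <= blknorm X.
Proof.
apply: opnormF_dominated => v' Hv'.
exists (fun j : 'I_r * 'I_n => if j.2 == b then v' (j.1, q) else 0); split.
  rewrite sum_pair; under eq_bigr do under eq_bigr do rewrite sqmod_if.
  under eq_bigr do rewrite sum_delta.
  apply: le_trans Hv'; rewrite [X in _ <= X]sum_pair; apply: ler_sum => j _.
  exact: (sqmod_le_sum (fun k => v' (j, k))).
have lhsE i p' : \sum_(j : 'I_r * 'I_m)
    (if (p' == p) && (j.2 == q) then X i j.1 a b else 0) * v' j =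
    if p' == p then \sum_j X i j a b * v' (j, q) else 0.
  case: eqP => _ /=; last by rewrite big1 // => j _; rewrite mul0r.
  rewrite sum_pair; apply: eq_bigr => j _ /=.
  by under eq_bigr do rewrite (fun_if (fun x => x * _)) mul0r; rewrite sum_delta.
have rhsE i a' : \sum_(j : 'I_r * 'I_n)
    X i j.1 a' j.2 * (if j.2 == b then v' (j.1, q) else 0) =
    \sum_j X i j a' b * v' (j, q).
  rewrite sum_pair; apply: eq_bigr => j _ /=.
  by under eq_bigr do rewrite (fun_if (fun x => _ * x)) mulr0; rewrite sum_delta.
rewrite !sum_pair; apply: ler_sum => i _.
under eq_bigr do rewrite lhsE sqmod_if.
under [X in _ <= X]eq_bigr do rewrite rhsE.
by rewrite sum_delta; apply: (sqmod_le_sum (fun a' => \sum_j X i j a' b * v' (j, q))).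
Qed.

Definition pairing_mx (n m r : nat) (tau : 'M['M[C]_n]_m) (X : 'M['M[C]_n]_r)
  : 'M['M[C]_m]_r := \matrix_(i, j) \matrix_(p, q) pairing (tau p q) (X i j).

Lemma blknorm_pairing_mx (n m r : nat) (tau : 'M['M[C]_n]_m) (X : 'M['M[C]_n]_r) :
  blknorm (pairing_mx tau X) = opnormF (fun i j => pairing (tau i.2 j.2) (X i.1 j.1)).
Proof. by congr opnormF; apply/funext => i; apply/funext => j; rewrite !mxE. Qed.

Lemma blknorm_pairing_mx_le (n m r : nat) (tau : 'M['M[C]_n]_m) (X : 'M['M[C]_n]_r) :
  blknorm X <= 1 -> blknorm (pairing_mx tau X) <= normMT tau.
Proof.
move=> HX; apply: ub_le_sup; last by exists r, X.
exists (\sum_p \sum_q \sum_a \sum_b Num.sqrt (sqmod (tau p q a b))).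
move=> _ [r' [X' [HX' ->]]]; rewrite blknorm_pairing_mx.
have -> : (fun i j : 'I_r' * 'I_m => pairing (tau i.2 j.2) (X' i.1 j.1)) =
   (fun i j => \sum_p \sum_q \sum_a \sum_b (tau p q a b *
        (if (i.2 == p) && (j.2 == q) then X' i.1 j.1 a b else 0))).
  apply/funext => i; apply/funext => j.
  rewrite (bigD1 i.2) // [X in _ = _ + X]big1 => [|p /negPf Hp]; last first.
    by do 3!apply: big1 => ? _; rewrite eq_sym Hp mulr0.
  rewrite addr0 (bigD1 j.2) // [X in _ = _ + X]big1 => [|q /negPf Hq]; last first.
    by do 2!apply: big1 => ? _; rewrite [j.2 == q]eq_sym Hq andbF mulr0.
  by rewrite addr0 !eqxx.
do 4!(apply: le_trans (opnormF_sum _ _) _; apply: ler_sum => ? _).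
apply: le_trans (opnormFZ _ _) _.
by rewrite ler_piMr ?sqrtr_ge0 // (le_trans (blknorm_entry_le _ _ _ _ _) HX').
Qed.

Lemma normMT_le (n m : nat) (tau : 'M['M[C]_n]_m) (c : R) :
  (forall r (X : 'M['M[C]_n]_r), blknorm X <= 1 -> blknorm (pairing_mx tau X) <= c) ->
  normMT tau <= c.
Proof.
move=> Hc; apply: ge_sup => [|_ [r [X [HX ->]]]]; last exact: Hc.
exists (blknorm (pairing_mx tau (0 : 'M['M[C]_n]_0))), 0, 0; split=> //.
by apply: opnormF_le => v _; rewrite big1 ?sqrtr0 ?ler01 // => -[[]].
Qed.

Lemma split_lshift m n (i : 'I_m) : fintype.split (lshift n i) = inl i.
Proof. exact: (unsplitK (inl i)). Qed.

Lemma split_rshift m n (i : 'I_n) : fintype.split (rshift m i) = inr i.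
Proof. exact: (unsplitK (inr i)). Qed.

Lemma blknorm_ulsub (r n1 n2 : nat) (X : 'M['M[C]_(n1 + n2)]_r) :
  blknorm (\matrix_(i, j) ulsubmx (X i j)) <= blknorm X.
Proof.
apply: opnormF_dominated => v' Hv'.
exists (fun j : 'I_r * 'I_(n1 + n2) =>
  if fintype.split j.2 is inl b then v' (j.1, b) else 0); split.
  apply: le_trans Hv'; rewrite !sum_pair; apply: ler_sum => j _.
  rewrite big_split_ord /= [X in _ + X]big1 => [|b _]; last by rewrite split_rshift sqmod0.
  by rewrite addr0; under eq_bigr do rewrite split_lshift.
rewrite !sum_pair; apply: ler_sum => i _.
rewrite [X in _ <= X]big_split_ord /= -[X in X <= _]addr0 lerD //; last first.
  by apply: sumr_ge0 => a _; apply: sqmod_ge0.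
apply: ler_sum => a _; rewrite le_eqVlt; apply/orP; left; apply/eqP; congr sqmod.
rewrite !sum_pair; apply: eq_bigr => j _ /=; rewrite big_split_ord /=.
rewrite [X in _ = _ + X]big1 ?addr0 => [|b _]; last by rewrite split_rshift mulr0.
by apply: eq_bigr => b _; rewrite split_lshift !mxE.
Qed.

Lemma blknorm_drsub (r n1 n2 : nat) (X : 'M['M[C]_(n1 + n2)]_r) :
  blknorm (\matrix_(i, j) drsubmx (X i j)) <= blknorm X.
Proof.
apply: opnormF_dominated => v' Hv'.
exists (fun j : 'I_r * 'I_(n1 + n2) =>
  if fintype.split j.2 is inr b then v' (j.1, b) else 0); split.
  apply: le_trans Hv'; rewrite !sum_pair; apply: ler_sum => j _.
  rewrite big_split_ord /= [X in X + _]big1 => [|b _]; last by rewrite split_lshift sqmod0.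
  by rewrite add0r; under eq_bigr do rewrite split_rshift.
rewrite !sum_pair; apply: ler_sum => i _.
rewrite [X in _ <= X]big_split_ord /= -[X in X <= _]add0r lerD //.
  by apply: sumr_ge0 => a _; apply: sqmod_ge0.
apply: ler_sum => a _; rewrite le_eqVlt; apply/orP; left; apply/eqP; congr sqmod.
rewrite !sum_pair; apply: eq_bigr => j _ /=; rewrite big_split_ord /=.
rewrite [X in _ = X + _]big1 ?add0r => [|b _]; last by rewrite split_lshift mulr0.
by apply: eq_bigr => b _; rewrite split_rshift !mxE.
Qed.

Definition tc_block (k n1 n2 : nat) (A : 'M['M[C]_n1]_k) (B : 'M['M[C]_n2]_k)
  : 'M['M[C]_(n1 + n2)]_k := \matrix_(p, q) block_mx (A p q) 0 0 (B p q).

Lemma tc_blockE (k n1 n2 : nat) (A : 'M['M[C]_n1]_k) (B : 'M['M[C]_n2]_k) p q :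
  tc_block A B p q = block_mx (A p q) 0 0 (B p q).
Proof. exact: mxE. Qed.

Lemma pairing_block (n1 n2 : nat) (a : 'M[C]_n1) (b : 'M[C]_n2) (Z : 'M[C]_(n1 + n2)) :
  pairing (block_mx a 0 0 b) Z = pairing a (ulsubmx Z) + pairing b (drsubmx Z).
Proof.
rewrite /pairing big_split_ord /=; congr (_ + _); apply: eq_bigr => i _;
  rewrite big_split_ord /=.
- rewrite [X in _ + X]big1 ?addr0 => [|j _]; last by rewrite block_mxEur mxE mul0r.
  by apply: eq_bigr => j _; rewrite block_mxEul !mxE.
- rewrite [X in X + _]big1 ?add0r => [|j _]; last by rewrite block_mxEdl mxE mul0r.
  by apply: eq_bigr => j _; rewrite block_mxEdr !mxE.
Qed.

Lemma normMT_tc_block (k n1 n2 : nat) (A : 'M['M[C]_n1]_k) (B : 'M['M[C]_n2]_k) :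
  normMT (tc_block A B) <= normMT A + normMT B.
Proof.
apply: normMT_le => r X HX; rewrite blknorm_pairing_mx.
under eq_fun do under eq_fun do rewrite mxE pairing_block.
apply: le_trans (opnormFD _ _) _; apply: lerD.
  have := blknorm_pairing_mx_le A (le_trans (blknorm_ulsub X) HX).
  by rewrite blknorm_pairing_mx; under eq_fun do under eq_fun do rewrite mxE.
have := blknorm_pairing_mx_le B (le_trans (blknorm_drsub X) HX).
by rewrite blknorm_pairing_mx; under eq_fun do under eq_fun do rewrite mxE.
Qed.

Lemma normMTZ (k n : nat) (A : 'M['M[C]_n]_k) (c : R) : 0 <= c ->
  normMT (map_mx ( *:%R c%:C) A) <= c * normMT A.
Proof.
move=> c0; apply: normMT_le => r X HX; rewrite blknorm_pairing_mx.
have pairingZ (M Z : 'M[C]_n) : pairing (c%:C *: M) Z = c%:C * pairing M Z.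
  rewrite /pairing mulr_sumr; apply: eq_bigr => a _.
  by rewrite mulr_sumr; apply: eq_bigr => b _; rewrite mxE mulrA.
under eq_fun do under eq_fun do rewrite mxE pairingZ.
apply: le_trans (opnormFZ _ _) _; rewrite sqrt_sqmodR // ler_wpM2l //.
by have := blknorm_pairing_mx_le A HX; rewrite blknorm_pairing_mx.
Qed.

(* The canonical element of [M_n(T_n)], i.e. the identity map of [M_n]. *)
Definition tc_unit (n : nat) : 'M['M[C]_n]_n := \matrix_(p, q) delta_mx p q.

Lemma normMT_tc_unit (n : nat) : normMT (tc_unit n) <= 1.
Proof.
apply: normMT_le => r X HX; apply: le_trans HX.
rewrite blknorm_pairing_mx le_eqVlt; apply/orP; left; apply/eqP.
congr opnormF; apply/funext => i; apply/funext => j.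
rewrite /pairing mxE (bigD1 i.2) //= [X in _ + X]big1 => [|a /negPf Ha]; last first.
  by apply: big1 => b _; rewrite mxE Ha mul0r.
rewrite addr0 (bigD1 j.2) //= [X in _ + X]big1 => [|b /negPf Hb]; last first.
  by rewrite mxE Hb andbF mul0r.
by rewrite addr0 mxE !eqxx mul1r.
Qed.

Lemma normMT_dim0 (k : nat) (A : 'M['M[C]_0]_k) : normMT A <= 0.
Proof.
apply: normMT_le => r X HX; rewrite blknorm_pairing_mx.
under eq_fun do under eq_fun do rewrite /pairing big_ord0.
exact: opnormF0.
Qed.

End TraceClassNorm.

Section OperatorSpace.
Variables (V : lmodType C) (mn : forall n, 'M[V]_n -> R).
Hypothesis mn_os : is_opspace mn.

Lemma mn_ge0 n (x : 'M[V]_n) : 0 <= mn x.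
Proof. by case: mn_os. Qed.

Lemma mnD n (x y : 'M[V]_n) : mn (x + y) <= mn x + mn y.
Proof. by case: mn_os. Qed.

Lemma mn_block_diag m n (x : 'M[V]_m) (y : 'M[V]_n) :
  mn (block_mx x 0 0 y) = Num.max (mn x) (mn y).
Proof. by case: mn_os. Qed.

Lemma opnorm_scalar_mx n (c : C) : opnorm (c%:M : 'M[C]_n) <= Num.sqrt (sqmod c).
Proof.
apply: opnormF_le => v Hv.
have scalarE i : \sum_j (c%:M : 'M[C]_n) i j * v j = c * v i.
  rewrite (bigD1 i) //= big1 => [|j /negPf Hj]; last by rewrite mxE eq_sym Hj mulr0n mul0r.
  by rewrite addr0 mxE eqxx mulr1n.
under eq_bigr do rewrite scalarE sqmodM.
rewrite -mulr_sumr sqrtrM ?sqmod_ge0 // ler_piMr ?sqrtr_ge0 //.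
by rewrite -sqrtr1 ler_sqrt ?ler01.
Qed.

Lemma lmulmx_scalar m n (c : C) (x : 'M[V]_(m, n)) : lmulmx c%:M x = map_mx ( *:%R c) x.
Proof.
apply/matrixP => i j; rewrite !mxE (bigD1 i) //= big1 ?addr0 => [|l /negPf Hl].
  by rewrite mxE eqxx mulr1n.
by rewrite mxE eq_sym Hl mulr0n scale0r.
Qed.

Lemma rmulmx_scalar m n (c : C) (x : 'M[V]_(m, n)) : rmulmx x c%:M = map_mx ( *:%R c) x.
Proof.
apply/matrixP => i j; rewrite !mxE (bigD1 j) //= big1 ?addr0 => [|l /negPf Hl].
  by rewrite mxE eqxx mulr1n.
by rewrite mxE Hl mulr0n scale0r.
Qed.

Lemma mn_scale n (c : C) (x : 'M[V]_n) :
  mn (map_mx ( *:%R c) x) <= Num.sqrt (sqmod c) * mn x.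
Proof.
case: mn_os => _ _ _ ruan _.
have -> : map_mx ( *:%R c) x = rmulmx (lmulmx c%:M x) 1%:M.
  by rewrite rmulmx_scalar lmulmx_scalar; apply/matrixP => i j; rewrite !mxE scale1r.
apply: le_trans (ruan _ _ _ _ _) _.
have one_le1 : opnorm (1%:M : 'M[C]_n) <= 1.
  by have := opnorm_scalar_mx n 1; rewrite /sqmod /= expr0n addr0 expr1n sqrtr1.
rewrite -[X in _ <= X]mulr1 ler_pM ?mulr_ge0 ?opnormF_ge0 ?mn_ge0 //.
by rewrite ler_wpM2r ?mn_ge0 ?opnorm_scalar_mx.
Qed.

Lemma mn0 n : mn (0 : 'M[V]_n) = 0.
Proof.
apply/eqP; rewrite eq_le mn_ge0 andbT.
have := mn_scale 0 (0 : 'M[V]_n); rewrite sqmod0 sqrtr0 mul0r.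
by rewrite (_ : map_mx _ _ = 0) //; apply/matrixP => i j; rewrite !mxE scale0r.
Qed.

Lemma mnN n (x : 'M[V]_n) : mn (- x) = mn x.
Proof.
have mnN_le (y : 'M[V]_n) : mn (- y) <= mn y.
  have := mn_scale (-1) y; rewrite sqmodN /sqmod /= expr0n addr0 expr1n sqrtr1 mul1r.
  by rewrite (_ : map_mx _ _ = - y) //; apply/matrixP => i j; rewrite !mxE scaleN1r.
by apply/eqP; rewrite eq_le mnN_le /= -{1}(opprK x) mnN_le.
Qed.

Lemma mnB n (x y : 'M[V]_n) : mn (x - y) <= mn x + mn y.
Proof. by rewrite -(mnN y); apply: mnD. Qed.

End OperatorSpace.

Section Span.
Variable V : lmodType C.
Implicit Types s : seq V.

Lemma spanP s v :
  Defs.span s v <-> exists c : nat -> C, v = \sum_(0 <= i < size s) c i *: s`_i.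
Proof.
split=> [[c ->]|[c ->]]; last by exists (fun i => c (val i)); rewrite big_mkord.
exists (fun k => if insub k is Some i then c i else 0).
by rewrite big_mkord; apply: eq_bigr => i _; rewrite valK.
Qed.

Lemma span0 s : Defs.span s 0.
Proof. by exists (fun _ => 0); rewrite big1 // => i _; rewrite scale0r. Qed.

Lemma spanB s v w : Defs.span s v -> Defs.span s w -> Defs.span s (v - w).
Proof.
move=> [c1 ->] [c2 ->]; exists (fun i => c1 i - c2 i).
by rewrite -sumrB; apply: eq_bigr => i _; rewrite scalerBl.
Qed.

Lemma span_catl s1 s2 : Defs.span s1 `<=` Defs.span (s1 ++ s2).
Proof.
move=> v /spanP [c ->]; apply/spanP.
exists (fun k => if (k < size s1)%N then c k else 0).
rewrite size_cat (big_cat_nat _ (leq_addr _ _)) //= [X in _ = _ + X]big_nat_cond.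
rewrite [X in _ = _ + X]big1 ?addr0 => [|i /andP[/andP[Hi _] _]]; last first.
  by rewrite ltnNge Hi scale0r.
by apply: eq_big_nat => i /andP[_ Hi]; rewrite Hi nth_cat Hi.
Qed.

Lemma span_catr s1 s2 : Defs.span s2 `<=` Defs.span (s1 ++ s2).
Proof.
move=> v /spanP [c ->]; apply/spanP.
exists (fun k => if (k < size s1)%N then 0 else c (k - size s1)%N).
rewrite size_cat (big_cat_nat _ (leq_addr _ _)) //= [X in _ = X + _]big_nat_cond.
rewrite [X in _ = X + _]big1 ?add0r => [|i /andP[/andP[_ Hi] _]]; last first.
  by rewrite Hi scale0r.
rewrite -{1}[size s1]add0n big_addn addKn.
apply: eq_big_nat => i _.
by rewrite ltnNge leq_addl /= addnK nth_cat ltnNge leq_addl /= addnK.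
Qed.

End Span.

Section BlockDiagonalSequence.
Variables (V : lmodType C) (mn : forall n, 'M[V]_n -> R).
Hypothesis mn_os : is_opspace mn.

Definition pad_mx n (A : 'M[V]_n) (a b : nat) : V :=
  if insub a is Some i then (if insub b is Some j then A i j else 0) else 0.

Lemma pad_mxE n (A : 'M[V]_n) (i j : 'I_n) : pad_mx A i j = A i j.
Proof. by rewrite /pad_mx !valK. Qed.

Lemma pad_mx_out n (A : 'M[V]_n) a b : (n <= a)%N || (n <= b)%N -> pad_mx A a b = 0.
Proof.
rewrite /pad_mx => /orP[Ha|Hb]; first by rewrite insubN // -leqNgt.
by case: insub => // i; rewrite insubN // -leqNgt.
Qed.

Lemma slice_pad_unit n k (q : {linear 'M[C]_n -> V}) (c : C) (tau : 'M['M[C]_n]_k) :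
  c != 0 ->
  slice (map_mx ( *:%R c^-1) tau) (pad_mx (map_mx q (map_mx ( *:%R c) (tc_unit n)))) =
  map_mx q tau.
Proof.
move=> c0; apply/matrixP => p r.
rewrite !mxE [in RHS](matrix_sum_delta (tau p r)) linear_sum.
apply: eq_bigr => a _; rewrite linear_sum; apply: eq_bigr => b _.
by rewrite pad_mxE !mxE !linearZ /= scalerA mulrA mulfV // mul1r.
Qed.

Variables (dim : nat -> nat) (X : forall l, 'M[V]_(dim l)).

Fixpoint offset J : nat := if J is J'.+1 then (offset J' + dim J')%N else 0%N.

Fixpoint diag_prefix J : 'M[V]_(offset J) :=
  if J is J'.+1 then block_mx (diag_prefix J') 0 0 (X J') else 0.

Definition diag_seq J : nat -> nat -> V := pad_mx (diag_prefix J).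

Lemma offset_mono : {homo offset : i j / (i <= j)%N}.
Proof. by apply: homo_leq => [//|y x z|i]; [apply: leq_trans | apply: leq_addr]. Qed.

Lemma diag_seq_out J a b : (offset J <= a)%N || (offset J <= b)%N -> diag_seq J a b = 0.
Proof. exact: pad_mx_out. Qed.

Lemma diag_seqSE J (a b : 'I_(offset J + dim J)) :
  diag_seq J.+1 a b = block_mx (diag_prefix J) 0 0 (X J) a b.
Proof. exact: pad_mxE. Qed.

Lemma diag_seqS_lshift J (a b : 'I_(offset J)) : diag_seq J.+1 a b = diag_seq J a b.
Proof.
by rewrite (diag_seqSE (lshift _ a) (lshift _ b)) block_mxEul /diag_seq pad_mxE.
Qed.

Lemma diag_seqS_rshift J (a b : 'I_(dim J)) :
  diag_seq J.+1 (offset J + a) (offset J + b) = X J a b.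
Proof. by rewrite (diag_seqSE (rshift _ a) (rshift _ b)) block_mxEdr. Qed.

Lemma diag_seq_stable J j a b : (J <= j)%N -> (a < offset J)%N -> (b < offset J)%N ->
  diag_seq j a b = diag_seq J a b.
Proof.
move=> + Ha Hb; elim: j => [|j IH]; first by rewrite leqn0 => /eqP->.
rewrite leq_eqVlt => /orP[/eqP-> //|]; rewrite ltnS => HJ.
have /(leq_trans Ha) Ha' := offset_mono HJ; have /(leq_trans Hb) Hb' := offset_mono HJ.
by rewrite -(IH HJ) (diag_seqS_lshift (Ordinal Ha') (Ordinal Hb')).
Qed.

Lemma trunc_diag_seqS i j : (i <= j)%N ->
  trunc (offset j.+1) (fun a b => diag_seq i a b - diag_seq j.+1 a b) =
  block_mx (trunc (offset j) (fun a b => diag_seq i a b - diag_seq j a b)) 0 0 (- X j).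
Proof.
move=> /offset_mono le_ij; apply/matrixP => a b.
rewrite -(splitK a) -(splitK b) [LHS]mxE diag_seqSE.
have le_off c : (offset i <= offset j + c)%N := leq_trans le_ij (leq_addr _ _).
have out c : diag_seq i (offset j + c) = fun _ => 0.
  by apply/funext => d; rewrite diag_seq_out // le_off.
have out' c d : diag_seq i d (offset j + c) = 0.
  by rewrite diag_seq_out // le_off orbT.
case: (fintype.split a) => a'; case: (fintype.split b) => b'.
- by rewrite !block_mxEul mxE /diag_seq pad_mxE.
- by rewrite !block_mxEur !mxE /= out' subr0.
- by rewrite !block_mxEdl !mxE /= out subr0.
- by rewrite !block_mxEdr /= out sub0r mxE.
Qed.

Lemma mn_trunc_diag_seq_lt (e : R) i j : 0 < e ->
  (forall l, (i <= l)%N -> mn (X l) < e) -> (i <= j)%N ->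
  mn (trunc (offset j) (fun a b => diag_seq i a b - diag_seq j a b)) < e.
Proof.
move=> e0 small; elim: j => [|j IH].
  by rewrite leqn0 => /eqP->; rewrite (_ : trunc _ _ = 0) ?mn0 //;
    apply/matrixP => a b; rewrite !mxE subrr.
rewrite leq_eqVlt => /orP[/eqP->|].
  by rewrite (_ : trunc _ _ = 0) ?mn0 //; apply/matrixP => a b; rewrite !mxE subrr.
rewrite ltnS => le_ij.
by rewrite trunc_diag_seqS // mn_block_diag // gt_max IH //= mnN // small.
Qed.

Lemma diag_seq_KV :
  (forall e : R, 0 < e -> exists J, forall l, (J <= l)%N -> mn (X l) < e) ->
  KV_seq mn offset diag_seq.
Proof.
move=> small; split=> [j a b|e e0]; first exact: diag_seq_out.
have [J HJ] := small e e0; exists J => i j Ji Jj.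
have tail i' : (J <= i')%N -> forall l, (i' <= l)%N -> mn (X l) < e.
  by move=> Ji' l /(leq_trans Ji'); apply: HJ.
have [le_ij|/ltnW le_ji] := leqP i j.
  by rewrite (maxn_idPr (offset_mono le_ij)); apply: mn_trunc_diag_seq_lt (tail _ Ji) _.
rewrite (maxn_idPl (offset_mono le_ji)) -mnN //.
rewrite (_ : - _ = trunc (offset i) (fun a b => diag_seq j a b - diag_seq i a b)).
  exact: mn_trunc_diag_seq_lt (tail _ Jj) _.
by apply/matrixP => a b; rewrite !mxE opprB.
Qed.

Lemma slice_tc_block J k (sg : 'M['M[C]_(offset J)]_k) (tau : 'M['M[C]_(dim J)]_k) :
  slice (tc_block sg tau) (diag_seq J.+1) =
  slice sg (diag_seq J) + slice tau (pad_mx (X J)).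
Proof.
apply/matrixP => p q; rewrite [LHS]mxE [RHS]mxE [slice sg _ _ _]mxE [slice tau _ _ _]mxE.
rewrite big_split_ord /=; congr (_ + _); apply: eq_bigr => a _; rewrite big_split_ord /=.
- rewrite [X in _ + X]big1 ?addr0 => [|b _].
    by apply: eq_bigr => b _; rewrite tc_blockE block_mxEul diag_seqS_lshift.
  by rewrite tc_blockE block_mxEur mxE scale0r.
- rewrite [X in X + _]big1 ?add0r => [|b _].
    by apply: eq_bigr => b _; rewrite tc_blockE block_mxEdr diag_seqS_rshift pad_mxE.
  by rewrite tc_blockE block_mxEdl mxE scale0r.
Qed.

Lemma slice_diag_seq_stable J j k (sg : 'M['M[C]_(offset J)]_k) : (J <= j)%N ->
  slice sg (diag_seq j) = slice sg (diag_seq J).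
Proof.
move=> Jj; apply/matrixP => p q; rewrite !mxE.
apply: eq_bigr => a _; apply: eq_bigr => b _.
by rewrite (diag_seq_stable Jj (ltn_ord a) (ltn_ord b)).
Qed.

Lemma diag_seq_slice_sum k (r : nat -> R) (v : nat -> 'M[V]_k) :
  (forall l, exists tau : 'M['M[C]_(dim l)]_k,
     normMT tau <= r l /\ slice tau (pad_mx (X l)) = v l) ->
  forall J, exists sg : 'M['M[C]_(offset J)]_k,
    normMT sg <= \sum_(0 <= l < J) r l /\ slice sg (diag_seq J) = \sum_(0 <= l < J) v l.
Proof.
move=> slices; elim=> [|J [sg [sg_norm sg_slice]]].
  exists 0; rewrite !big_geq //; split; first exact: normMT_dim0.
  by apply/matrixP => p q; rewrite !mxE big_ord0.
have [tau [tau_norm tau_slice]] := slices J.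
exists (tc_block sg tau); rewrite !big_nat_recr //=; split.
  by apply: le_trans (normMT_tc_block _ _) _; apply: lerD.
by rewrite slice_tc_block sg_slice tau_slice.
Qed.

End BlockDiagonalSequence.

Section PowersOfTwo.

Lemma pow2N_gt0 n : 0 < 2 ^- n :> R.
Proof. by rewrite invr_gt0 exprn_gt0. Qed.

Lemma pow2N_le m n : (m <= n)%N -> 2 ^- n <= 2 ^- m :> R.
Proof.
by move=> le_mn; rewrite lef_pV2 ?posrE ?exprn_gt0 // ler_eXn2l ?ltr1n.
Qed.

Lemma pow2NS n : 2 ^- n.+1 = 2 ^- n / 2 :> R.
Proof. by rewrite exprSr invfM. Qed.

Lemma sum_pow2NS_le1 J : \sum_(0 <= l < J) 2 ^- l.+1 <= 1 :> R.
Proof.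
suff -> : \sum_(0 <= l < J) 2 ^- l.+1 = 1 - 2 ^- J :> R.
  by rewrite gerBl ltW ?pow2N_gt0.
elim: J => [|J IH]; first by rewrite big_geq // expr0 invr1 subrr.
by rewrite big_nat_recr //= IH pow2NS; set u := 2 ^- J; field.
Qed.

Lemma pow2N_small (e : R) : 0 < e -> exists J, 2 ^- J < e.
Proof.
move=> e0; have einv : 0 <= e^-1 by rewrite invr_ge0 ltW.
have := archi_boundP einv.
set J := Num.bound _ => ltJ; exists J.
rewrite invf_plt ?posrE ?exprn_gt0 //; apply: lt_trans ltJ _.
by rewrite -natrX ltr_nat ltn_expl.
Qed.

End PowersOfTwo.

Section Presentations.
Variables (V : lmodType C) (mn : forall n, 'M[V]_n -> R).

Record presentation := Presentation {
  pdim : nat;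
  pmap : {linear 'M[C]_pdim -> V};
  plift : R;
  pbound : R }.

(* For the complete isomorphism [phi : X -> T_n / ker (pmap P)] of [coexact],
   [plift P] bounds [||phi||_cb] and [pbound P] bounds [||phi^-1||_cb]. *)
Definition presents (L : R) (X : set V) (P : presentation) : Prop :=
  [/\ 0 <= plift P, 0 <= pbound P, plift P * pbound P <= L,
      forall m (tau : 'M['M[C]_(pdim P)]_m),
        mn (map_mx (pmap P) tau) <= pbound P * normMT tau &
      forall m (y : 'M[V]_m), (forall i j, X (y i j)) ->
        forall delta : R, 0 < delta -> exists tau : 'M['M[C]_(pdim P)]_m,
          map_mx (pmap P) tau = y /\ normMT tau < plift P * mn y + delta].

Lemma coexact_presents (lam : R) (X : set V) :
  coexact mn lam X -> exists P, presents (`|lam| + 1) X P.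
Proof.
move=> /(_ 1 ltr01) [n [q [a [b [_ [a0 b0 ab bounded lifts]]]]]].
exists (Presentation q a b); split=> //.
by apply: ltW (lt_le_trans ab _); rewrite lerD2r ler_norm.
Qed.

Lemma subcoexact_chain (lam : R) (s : nat -> seq V) : subcoexact mn lam ->
  exists t : nat -> seq V, [/\ forall l, Defs.span (s l) `<=` Defs.span (t l),
    forall l, Defs.span (t l) `<=` Defs.span (t l.+1) &
    forall l, coexact mn lam (Defs.span (t l))].
Proof.
move=> /choice [f Hf].
pose fix t l := if l is l'.+1 then f (s l ++ t l') else f (s 0%N).
exists t; split=> [[|l] v|l v|[|l]] /=.
- by case: (Hf (s 0%N)) => sub _; apply: sub.
- by move=> sv; case: (Hf (s l.+1 ++ t l)) => sub _; apply: sub; apply: span_catl.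
- by move=> tv; case: (Hf (s l.+1 ++ t l)) => sub _; apply: sub; apply: span_catr.
- by case: (Hf (s 0%N)).
- by case: (Hf (s l.+1 ++ t l)).
Qed.

End Presentations.

Section Construction.
Variables (V : lmodType C) (mn : forall n, 'M[V]_n -> R).
Hypothesis mn_os : is_opspace mn.
Variables (K : mxset V) (M L : R).
Arguments K : clear implicits.
Hypotheses (M_ge0 : 0 <= M) (L_ge0 : 0 <= L).
Hypothesis K_bounded : forall k (y : 'M[V]_k), K k y -> mn y <= M.

(* Chosen so that [pbound * weight] at level [l.+1] is at most [2 ^- l]. *)
Definition tol l : R := 2 ^- (3 * l).+3 / (2 * L + 1).

Variables (t : nat -> seq V) (P : nat -> presentation V).
Hypothesis t_mono : forall l, Defs.span (t l) `<=` Defs.span (t l.+1).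
Hypothesis P_presents : forall l, presents mn L (Defs.span (t l)) (P l).
Hypothesis K_approx : forall l k (y : 'M[V]_k), K k y ->
  exists z : 'M[V]_k, (forall i j, Defs.span (t l) (z i j)) /\ mn (y - z) < tol l.

Lemma tol_gt0 l : 0 < tol l.
Proof. by rewrite divr_gt0 ?pow2N_gt0 // ltr_wpDl ?mulr_ge0. Qed.

Lemma tol_le_pow2N l : tol l <= 2 ^- l.
Proof.
rewrite ler_pdivrMr ?ltr_wpDl ?mulr_ge0 //.
have le3 : (l <= (3 * l).+3)%N by lia.
apply: le_trans (pow2N_le le3) (ler_peMr (ltW (pow2N_gt0 l)) _).
by rewrite lerDr mulr_ge0.
Qed.

Lemma tolS_le l : tol l.+1 <= tol l.
Proof. by rewrite ler_wpM2r ?invr_ge0 ?addr_ge0 ?mulr_ge0 // pow2N_le //; lia. Qed.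

Definition incr_bound l : R := (if l is l'.+1 then tol l' else M) + tol l.
Definition slack l : R := tol l / (pbound (P l) + 1).
Definition lift_bound l : R := plift (P l) * incr_bound l + slack l.
Definition weight l : R := 2 ^+ l.+1 * lift_bound l.
Definition block l : 'M[V]_(pdim (P l)) :=
  map_mx (pmap (P l)) (map_mx ( *:%R (weight l)%:C) (tc_unit _)).

Lemma incr_bound_ge0 l : 0 <= incr_bound l.
Proof. by case: l => [|l]; rewrite addr_ge0 // ltW ?tol_gt0. Qed.

Lemma slack_gt0 l : 0 < slack l.
Proof. by have [_ b0 _ _ _] := P_presents l; rewrite divr_gt0 ?tol_gt0 ?ltr_wpDl. Qed.

Lemma lift_bound_gt0 l : 0 < lift_bound l.
Proof.
have [a0 _ _ _ _] := P_presents l.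
by rewrite ltr_wpDl ?slack_gt0 // mulr_ge0 ?incr_bound_ge0.
Qed.

Lemma weight_gt0 l : 0 < weight l.
Proof. by rewrite mulr_gt0 ?exprn_gt0 ?lift_bound_gt0. Qed.

Lemma pbound_lift_boundS_le l : pbound (P l.+1) * lift_bound l.+1 <= 2 ^- (3 * l).+3.
Proof.
have [a0 b0 ab _ _] := P_presents l.+1.
set a := plift _ in a0 ab *; set b := pbound _ in b0 ab *.
have t0 := tol_gt0 l; have t1 := tol_gt0 l.+1; have t10 := tolS_le l.
have tolE : (2 * L + 1) * tol l = 2 ^- (3 * l).+3.
  by rewrite mulrC divfK // gt_eqF // ltr_wpDl ?mulr_ge0.
have slack_le : b * slack l.+1 <= tol l.+1.
  rewrite /slack -/b mulrA ler_pdivrMr ?ltr_wpDl // [b * _]mulrC.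
  by rewrite ler_pM2l // lerDl.
have ab_incr : a * b * incr_bound l.+1 <= L * incr_bound l.+1.
  by rewrite ler_wpM2r ?incr_bound_ge0.
have L_tol : L * tol l.+1 <= L * tol l by rewrite ler_wpM2l.
rewrite -tolE /lift_bound mulrDr mulrCA mulrA -/a; move: ab_incr; rewrite /incr_bound.
lra.
Qed.

Lemma mn_blockS_le l : mn (block l.+1) <= 2 ^- l.
Proof.
have [_ b0 _ bounded _] := P_presents l.+1.
apply: le_trans (bounded _ _) _.
have unit_le : normMT (map_mx ( *:%R (weight l.+1)%:C) (tc_unit (pdim (P l.+1))))
    <= weight l.+1.
  apply: le_trans (normMTZ _ (ltW (weight_gt0 _))) _.
  exact: ler_piMr (ltW (weight_gt0 _)) (normMT_tc_unit _).
apply: le_trans (ler_wpM2l b0 unit_le) _.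
rewrite /weight mulrCA; apply: le_trans (ler_wpM2l _ (pbound_lift_boundS_le l)) _.
  by rewrite ltW ?exprn_gt0.
rewrite ler_pdivrMr ?exprn_gt0 // ler_pdivlMl ?exprn_gt0 // -exprD.
by rewrite ler_eXn2l ?ltr1n //; lia.
Qed.

Lemma block_small (e : R) : 0 < e -> exists J, forall l, (J <= l)%N -> mn (block l) < e.
Proof.
move=> e0; have [J HJ] := pow2N_small e0; exists J.+1 => -[//|l] /ltnSE Jl.
exact: le_lt_trans (mn_blockS_le l) (le_lt_trans (pow2N_le Jl) HJ).
Qed.

Lemma block_slice l k (w : 'M[V]_k) :
  (forall i j, Defs.span (t l) (w i j)) -> mn w <= incr_bound l ->
  exists tau : 'M['M[C]_(pdim (P l))]_k,
    normMT tau <= 2 ^- l.+1 /\ slice tau (pad_mx (block l)) = w.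
Proof.
move=> w_span w_norm; have [a0 _ _ _ lifts] := P_presents l.
have [tau [tauE tau_norm]] := lifts _ _ w_span _ (slack_gt0 l).
have w0 := weight_gt0 l.
exists (map_mx ( *:%R (weight l)^-1%:C) tau); split.
  have tau_le : normMT tau <= lift_bound l.
    by apply: le_trans (ltW tau_norm) _; rewrite lerD2r ler_wpM2l.
  apply: le_trans (normMTZ _ _) _; first by rewrite invr_ge0 ltW.
  apply: le_trans (ler_wpM2l _ tau_le) _; first by rewrite invr_ge0 ltW.
  by rewrite /weight invfM -mulrA mulVf ?mulr1 ?gt_eqF ?lift_bound_gt0.
by rewrite fmorphV slice_pad_unit ?tauE // fmorph_eq0 gt_eqF.
Qed.

Lemma K_in_hull k (y : 'M[V]_k) : K k y -> in_hull_closure mn (diag_seq block) y.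
Proof.
move=> Ky; have [z Hz] := choice (fun l => K_approx l Ky).
pose prev l := if l is l'.+1 then z l' else 0.
have prev_span l i j : Defs.span (t l) (prev l i j).
  by case: l => [|l] /=; [rewrite mxE; apply: span0 | apply/t_mono/(proj1 (Hz l))].
have prev_err l : mn (y - prev l) <= if l is l'.+1 then tol l' else M.
  by case: l => [|l] /=; [rewrite subr0; apply: K_bounded | apply/ltW/(proj2 (Hz l))].
have incr_slices l : exists tau : 'M['M[C]_(pdim (P l))]_k,
    normMT tau <= 2 ^- l.+1 /\ slice tau (pad_mx (block l)) = prev l.+1 - prev l.
  apply: block_slice => [i j|].
    by rewrite !mxE; apply: spanB; [apply: (proj1 (Hz l)) | apply: prev_span].
  have -> : prev l.+1 - prev l = (y - prev l) - (y - prev l.+1).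
    by rewrite opprB [RHS]addrC addrA subrK.
  by apply: le_trans (mnB _ _ _) _; rewrite // lerD ?prev_err ?ltW ?(proj2 (Hz l)).
move=> e e0; have [J HJ] := pow2N_small e0.
have [sg [sg_norm sg_slice]] := diag_seq_slice_sum incr_slices J.+1.
exists (offset (fun l => pdim (P l)) J.+1), sg; split.
  exact: le_trans sg_norm (sum_pow2NS_le1 _).
exists J.+1 => j Jj.
rewrite slice_diag_seq_stable // sg_slice telescope_sumr //= subr0 -mnN // opprB.
exact: lt_le_trans (proj2 (Hz J)) (le_trans (tol_le_pow2N J) (ltW HJ)).
Qed.

Lemma exists_KV_hull : exists (N : nat -> nat) (u : nat -> nat -> nat -> V),
  KV_seq mn N u /\ forall k y, K k y -> in_hull_closure mn u y.
Proof.
exists (offset (fun l => pdim (P l))), (diag_seq block); split; last exact: K_in_hull.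
exact: diag_seq_KV block_small.
Qed.

End Construction.

End OperatorCompact.

Unset Implicit Arguments.

Theorem theorem6p4 (R : realType) (V : lmodType R[i])
    (mn : forall n, 'M[V]_n -> R) (Hos : is_opspace mn)
    (lam : R) (Hlam : subcoexact mn lam)
    (K : mxset V) (HK : completely_compact mn K) :
  operator_compact mn K.
Proof.
have [K_closed [M K_bounded] K_approx] := HK.
split=> //.
have L_ge0 : 0 <= `|lam| + 1 by rewrite addr_ge0.
have [s Hs] := choice (fun l => K_approx _ (tol_gt0 L_ge0 l)).
have [t [s_t t_mono t_coex]] := subcoexact_chain s Hlam.
have [P HP] := choice (fun l => coexact_presents (t_coex l)).
apply: (exists_KV_hull Hos (normr_ge0 M) L_ge0 _ t_mono HP).
  by move=> k y /K_bounded/le_trans; apply; rewrite ler_norm.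
move=> l k y /(Hs l) [z [z_span z_err]].
by exists z; split=> // i j; apply/s_t/z_span.
Qed.
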